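(* Let $A\in\mathbb{R}^{m\times n}$, $G:\mathbb{R}^k\to\mathbb{R}^n$, $\epsilon_{\max}\ge0$, let $l$ be a positive integer and $C_0,C_1,\delta,t\ge0$. (i) (Sufficiency.) Suppose that for all $\eta\in T_A(2\epsilon_{\max})$, $$\|\eta\|_2\le\frac{C_0}{2}l^{-t}\sigma_{2l,G'}(\eta)+C_1\epsilon_{\max}+\delta.$$ Then the decoder $\Delta(y)=\arg\min_{x:\|Ax-y\|_2\le\epsilon_{\max}}\sigma_{l,G}(x)$ satisfies, for all $x\in\mathbb{R}^n$ and all $\epsilon$ with $\|\epsilon\|_2\le\epsilon_{\max}$, $$\|x-\Delta(Ax+\epsilon)\|_2\le C_0l^{-t}\sigma_{l,G}(x)+C_1\epsilon_{\max}+\delta.$$ (ii) (Necessity.) Conversely, if some decoder $\Delta:\mathbb{R}^m\to\mathbb{R}^n$ satisfies $\|x-\Delta(Ax+\epsilon)\|_2\le C_0l^{-t}\sigma_{l,G}(x)+C_1\epsilon_{\max}+\delta$ for all $x\in\mathbb{R}^n$ and all $\|\epsilon\|_2\le\epsilon_{\max}$, then for all $\eta\in T_A(\epsilon_{\max})$, $$\|\eta\|_2\le C_0l^{-t}\sigma_{2l,G'}(\eta)+2C_1\epsilon_{\max}+2\delta.$$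
   Context: For $v\in\mathbb{R}^n$ and $s\ge0$, $S_s(v)=\{x\in\mathbb{R}^n:\|x-v\|_0\le s\}$ ($\|\cdot\|_0$ counts nonzero coordinates), and $S_s=S_s(0)$. For a function $H$ with domain $D$, $S_{s,H}=\bigcup_{w\in D}S_s(H(w))$ and $\sigma_{s,H}(x)=\inf_{\hat x\in S_{s,H}}\|x-\hat x\|_1$. The difference function $G':\mathbb{R}^k\times\mathbb{R}^k\to\mathbb{R}^n$ is $G'(z_1,z_2)=G(z_1)-G(z_2)$, so $S_{s,G'}=\{G(z_1)-G(z_2)+\nu: z_1,z_2\in\mathbb{R}^k,\ \nu\in S_s\}$. The $\epsilon$-tube of $A$ is $T_A(\epsilon)=\{w\in\mathbb{R}^n:\|Aw\|_2\le\epsilon\}$. *)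

From Stdlib Require Import Reals ClassicalEpsilon.
From mathcomp Require Import ssreflect ssrfun ssrbool eqtype ssrnat seq fintype bigop.

Set Implicit Arguments.
Unset Strict Implicit.
Unset Printing Implicit Defensive.

Local Open Scope R_scope.

Definition vec (n : nat) := 'I_n -> R.
Definition mat (m n : nat) := 'I_m -> 'I_n -> R.

Definition vadd n (x y : vec n) : vec n := fun i => x i + y i.
Definition vsub n (x y : vec n) : vec n := fun i => x i - y i.
Definition mulv m n (A : mat m n) (x : vec n) : vec m :=
  fun i => \big[Rplus/0]_(j < n) (A i j * x j).

Definition norm1 n (x : vec n) : R := \big[Rplus/0]_(i < n) Rabs (x i).
Definition norm2 n (x : vec n) : R := sqrt (\big[Rplus/0]_(i < n) (x i * x i)).
Definition norm0 n (x : vec n) : nat :=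
  #|[pred i : 'I_n | if Req_EM_T (x i) 0 then false else true]|.

Definition in_S n (s : nat) (v x : vec n) : Prop := (norm0 (vsub x v) <= s)%nat.
Definition in_SH (D : Type) n (s : nat) (H : D -> vec n) (x : vec n) : Prop :=
  exists w : D, in_S s (H w) x.

Definition is_glb (E : R -> Prop) (r : R) : Prop :=
  (forall e, E e -> r <= e) /\ (forall b, (forall e, E e -> b <= e) -> b <= r).
Definition Rinf (E : R -> Prop) : R := epsilon (inhabits 0) (is_glb E).

Definition sigma_sG (D : Type) n (s : nat) (H : D -> vec n) (x : vec n) : R :=
  Rinf (fun r => exists xhat, in_SH s H xhat /\ r = norm1 (vsub x xhat)).

Definition Gdiff k n (G : vec k -> vec n) : vec k * vec k -> vec n :=
  fun p => vsub (G p.1) (G p.2).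

Definition in_tube m n (A : mat m n) (eps : R) (w : vec n) : Prop :=
  norm2 (mulv A w) <= eps.

(* Sufficiency: x is feasible and xhat is, so A (x - xhat) lies in the tube of
   radius 2 emax; best approximation errors are subadditive along G', hence
   sigma_{2l,G'}(x - xhat) <= sigma_{l,G}(x) + sigma_{l,G}(xhat) <= 2 sigma_{l,G}(x)
   by minimality of xhat.
   Necessity: a point w = G z1 - G z2 + nu of S_{2l,G'} splits nu into two
   l-sparse parts, which writes eta = x1 - x2 with sigma_{l,G}(x1) <= ||eta - w||_1
   and x2 in S_{l,G}.  Measuring x1 without noise and x2 with noise A eta gives
   the same data, so ||eta||_2 <= err(x1) + err(x2); then take the infimum over w. *)

From HB Require Import structures.
From Stdlib Require Import Reals Lra Psatz ClassicalEpsilon FunctionalExtensionality.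
From mathcomp Require Import ssreflect ssrfun ssrbool eqtype ssrnat seq fintype bigop.
From mathcomp Require Import zify.

Set Implicit Arguments.
Unset Strict Implicit.
Unset Printing Implicit Defensive.

Local Open Scope R_scope.

HB.instance Definition _ := Monoid.isComLaw.Build R 0 Rplus
  (fun x y z => esym (Rplus_assoc x y z)) Rplus_comm Rplus_0_l.

Section RealSums.

Variables (I : Type) (r : seq I) (P : pred I).

Lemma sumR_ge0 (F : I -> R) : (forall i, 0 <= F i) -> 0 <= \big[Rplus/0]_(i <- r | P i) F i.
Proof.
by move=> F_ge0; apply: (big_ind (fun s => 0 <= s)) => // *; [lra | apply: Rplus_le_le_0_compat].
Qed.

Lemma sumR_le (F1 F2 : I -> R) : (forall i, F1 i <= F2 i) ->
  \big[Rplus/0]_(i <- r | P i) F1 i <= \big[Rplus/0]_(i <- r | P i) F2 i.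
Proof. by move=> le_F; apply: (big_ind2 (fun s1 s2 => s1 <= s2)) => // *; lra. Qed.

Lemma sumR_scale (c : R) (F : I -> R) :
  \big[Rplus/0]_(i <- r | P i) (c * F i) = c * \big[Rplus/0]_(i <- r | P i) F i.
Proof. by rewrite (big_morph (Rmult c) (Rmult_plus_distr_l c) (Rmult_0_r c)). Qed.

Lemma sumR_opp (F : I -> R) :
  \big[Rplus/0]_(i <- r | P i) (- F i) = - \big[Rplus/0]_(i <- r | P i) F i.
Proof. by rewrite (big_morph Ropp Ropp_plus_distr Ropp_0). Qed.

Lemma sumR_cauchy_schwarz (x y : I -> R) :
  (\big[Rplus/0]_(i <- r | P i) (x i * y i)) ^ 2 <=
  \big[Rplus/0]_(i <- r | P i) (x i * x i) * \big[Rplus/0]_(i <- r | P i) (y i * y i).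
Proof.
pose CS S X Y := S ^ 2 <= X * Y /\ 0 <= X /\ 0 <= Y.
suff [] : CS (\big[Rplus/0]_(i <- r | P i) (x i * y i))
  (\big[Rplus/0]_(i <- r | P i) (x i * x i)) (\big[Rplus/0]_(i <- r | P i) (y i * y i)) by [].
apply: (big_rec3 CS); first by rewrite /CS; lra.
move=> i S X Y _ [le_S [X_ge0 Y_ge0]]; set a := x i; set b := y i.
(* the cross term 2 S a b is bounded through its square: (2 S a b)^2 <= 4 X Y (a b)^2 <= (X b^2 + a^2 Y)^2 *)
have cross : 2 * S * (a * b) <= X * (b * b) + a * a * Y.
  apply: Rsqr_incr_0_var; last by nra.
  have := pow2_ge_0 (X * (b * b) - a * a * Y).
  have : S ^ 2 * (a * b) ^ 2 <= X * Y * (a * b) ^ 2.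
    by apply: Rmult_le_compat_r; [apply: pow2_ge_0 | lra].
  rewrite /Rsqr; nra.
rewrite /CS; nra.
Qed.

End RealSums.

Section Norms.

Variable n : nat.
Implicit Types u v w : vec n.

Lemma sum_sqr_ge0 u : 0 <= \big[Rplus/0]_(i < n) (u i * u i).
Proof. by apply: sumR_ge0 => i; apply: Rle_0_sqr. Qed.

Lemma sum_cross_le_norm2 u v :
  \big[Rplus/0]_(i < n) (u i * v i) <= norm2 u * norm2 v.
Proof.
rewrite /norm2 -sqrt_mult; try exact: sum_sqr_ge0.
apply: Rsqr_incr_0_var; last exact: sqrt_pos.
rewrite Rsqr_sqrt; last by apply: Rmult_le_pos; apply: sum_sqr_ge0.
by rewrite Rsqr_pow2; apply: sumR_cauchy_schwarz.
Qed.

Lemma norm2_add_le u v : norm2 (vadd u v) <= norm2 u + norm2 v.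
Proof.
have expand : \big[Rplus/0]_(i < n) (vadd u v i * vadd u v i) =
  \big[Rplus/0]_(i < n) (u i * u i) + \big[Rplus/0]_(i < n) (v i * v i)
  + 2 * \big[Rplus/0]_(i < n) (u i * v i).
  rewrite (eq_bigr (fun i => u i * u i + v i * v i + 2 * (u i * v i))).
    by rewrite !big_split sumR_scale.
  by move=> i _; rewrite /vadd; ring.
have sq_u := sqrt_sqrt _ (sum_sqr_ge0 u).
have sq_v := sqrt_sqrt _ (sum_sqr_ge0 v).
have := sum_cross_le_norm2 u v; rewrite /norm2 in sq_u sq_v * => cross.
apply: Rsqr_incr_0_var; last by apply: Rplus_le_le_0_compat; apply: sqrt_pos.
rewrite Rsqr_sqrt; last exact: sum_sqr_ge0.
rewrite expand /Rsqr; lra.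
Qed.

Lemma norm2_subC u v : norm2 (vsub u v) = norm2 (vsub v u).
Proof. by rewrite /norm2; congr sqrt; apply: eq_bigr => i _; rewrite /vsub; ring. Qed.

Lemma norm2_sub_le u v w : norm2 (vsub u w) <= norm2 (vsub u v) + norm2 (vsub v w).
Proof.
have -> : vsub u w = vadd (vsub u v) (vsub v w).
  by apply: functional_extensionality => i; rewrite /vadd /vsub; ring.
exact: norm2_add_le.
Qed.

Lemma norm2_0 : norm2 (fun _ : 'I_n => 0) = 0.
Proof. by rewrite /norm2 big1 ?sqrt_0 // => i _; ring. Qed.

Lemma norm1_ge0 u : 0 <= norm1 u.
Proof. by apply: sumR_ge0 => i; apply: Rabs_pos. Qed.

Lemma norm1_sub_le u v : norm1 (vsub u v) <= norm1 u + norm1 v.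
Proof.
rewrite /norm1 -big_split; apply: sumR_le => i.
by rewrite /vsub -(Rabs_Ropp (v i)); apply: Rabs_triang.
Qed.

Lemma norm1_subvv u : norm1 (vsub u u) = 0.
Proof. by rewrite /norm1 big1 // => i _; rewrite /vsub Rminus_diag Rabs_R0. Qed.

Definition support u : pred 'I_n := [pred i | if Req_EM_T (u i) 0 then false else true].

Lemma supportP u i : reflect (u i <> 0) (i \in support u).
Proof. by rewrite inE /=; case: Req_EM_T => u_i; constructor. Qed.

Lemma norm0_le_size u (t : seq 'I_n) :
  (forall i, u i <> 0 -> i \in t) -> (norm0 u <= size t)%nat.
Proof.
move=> supp_t; apply: leq_trans (card_size t); apply: subset_leq_card.
by apply/subsetP => i /supportP; apply: supp_t.
Qed.

Lemma norm0_subvv u : norm0 (vsub u u) = 0%nat.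
Proof. by apply/eqP; rewrite -leqn0; apply: (norm0_le_size (t := [::])) => i; rewrite /vsub; lra. Qed.

Lemma norm0_opp u : norm0 (fun i => - u i) = norm0 u.
Proof.
apply: eq_card => i; apply/supportP/supportP => ne0 u0; apply: ne0; lra.
Qed.

Lemma norm0_sub_le u v : (norm0 (vsub u v) <= norm0 u + norm0 v)%nat.
Proof.
apply: leq_trans (norm0_le_size (t := enum (support u) ++ enum (support v)) _) _.
  move=> i ne0; rewrite mem_cat !mem_enum; apply/orP.
  case: (Req_dec (u i) 0) => [u0 | /supportP]; last by left.
  by right; apply/supportP => v0; apply: ne0; rewrite /vsub u0 v0; ring.
by rewrite size_cat -!cardE.
Qed.

Lemma norm0_split (s1 s2 : nat) u : (norm0 u <= s1 + s2)%nat ->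
  exists u1 u2, u = vadd u1 u2 /\ (norm0 u1 <= s1)%nat /\ (norm0 u2 <= s2)%nat.
Proof.
move=> le_u; set e := enum (support u).
exists (fun i => if i \in take s1 e then u i else 0),
       (fun i => if i \in take s1 e then 0 else u i).
split; first by apply: functional_extensionality => i; rewrite /vadd; case: ifP => _; ring.
split.
  apply: leq_trans (norm0_le_size (t := take s1 e) _) _; first by move=> i; case: ifP.
  by rewrite size_take_min geq_minl.
apply: leq_trans (norm0_le_size (t := drop s1 e) _) _.
  move=> i; case: ifP => // notT u_i.
  have : i \in e by rewrite mem_enum; apply/supportP.
  by rewrite -{1}(cat_take_drop s1 e) mem_cat notT.
have card_e : size e = norm0 u by rewrite -cardE.
rewrite size_drop card_e; lia.
Qed.

End Norms.

Lemma Rinf_is_glb (E : R -> Prop) (b : R) :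
  (exists r, E r) -> (forall r, E r -> b <= r) -> is_glb E (Rinf E).
Proof.
move=> [r0 E_r0] b_lb; apply: epsilon_spec.
have bounded : bound (fun y => E (- y)) by exists (- b) => y /b_lb; lra.
have inhabited : exists y, E (- y) by exists (- r0); rewrite Ropp_involutive.
have [M [M_ub M_least]] := completeness _ bounded inhabited.
exists (- M); split => [r E_r | b' b'_lb].
  by have := M_ub (- r); rewrite Ropp_involutive => /(_ E_r); lra.
suff : M <= - b' by lra.
by apply: M_least => y /b'_lb; lra.
Qed.

Section BestApproximation.

Variables (D : Type) (n s : nat) (H : D -> vec n).
Implicit Types x v : vec n.

Lemma in_SH_self w : in_SH s H (H w).
Proof. by exists w; rewrite /in_S norm0_subvv. Qed.

Lemma sigma_glb (w0 : D) x :
  is_glb (fun r => exists v, in_SH s H v /\ r = norm1 (vsub x v)) (sigma_sG s H x).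
Proof.
apply: (Rinf_is_glb (b := 0)); first by exists (norm1 (vsub x (H w0))), (H w0); split => //; apply: in_SH_self.
by move=> r [v [_ ->]]; apply: norm1_ge0.
Qed.

Lemma sigma_le_dist x v : in_SH s H v -> sigma_sG s H x <= norm1 (vsub x v).
Proof. by move=> [w Hv]; apply: (sigma_glb w x).1; exists v; split => //; exists w. Qed.

Lemma sigma_le0 x : in_SH s H x -> sigma_sG s H x <= 0.
Proof. by move=> Hx; rewrite -(norm1_subvv x); apply: sigma_le_dist. Qed.

Lemma sigma_ge (w0 : D) x b :
  (forall v, in_SH s H v -> b <= norm1 (vsub x v)) -> b <= sigma_sG s H x.
Proof. by move=> b_lb; apply: (sigma_glb w0 x).2 => r [v [Hv ->]]; apply: b_lb. Qed.

Lemma sigma_ge_affine (w0 : D) x (K a b : R) : 0 <= K ->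
  (forall v, in_SH s H v -> a <= K * norm1 (vsub x v) + b) -> a <= K * sigma_sG s H x + b.
Proof.
move=> [K_gt0 | <-] bound; last by have := bound _ (in_SH_self w0); lra.
have K_div : K * ((a - b) / K) = a - b by field; lra.
have : (a - b) / K <= sigma_sG s H x.
  apply: (sigma_ge w0) => v /bound a_le; apply: (Rmult_le_reg_l K) => //.
  by rewrite K_div; lra.
by move=> /(Rmult_le_compat_l K _ _ (Rlt_le _ _ K_gt0)); rewrite K_div; lra.
Qed.

End BestApproximation.

Section DifferenceModel.

Variables (k n : nat) (G : vec k -> vec n).
Implicit Types x y u v w : vec n.

Let z0 : vec k := fun _ => 0.

Lemma in_SH_Gdiff_sub s1 s2 u v :
  in_SH s1 G u -> in_SH s2 G v -> in_SH (s1 + s2) (Gdiff G) (vsub u v).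
Proof.
move=> [z1 Hu] [z2 Hv]; exists (z1, z2); rewrite /in_S.
have -> : vsub (vsub u v) (Gdiff G (z1, z2)) = vsub (vsub u (G z1)) (vsub v (G z2)).
  by apply: functional_extensionality => i; rewrite /Gdiff /vsub /=; ring.
by apply: leq_trans (norm0_sub_le _ _) _; apply: leq_add.
Qed.

Lemma sigma_Gdiff_sub_le s1 s2 x y :
  sigma_sG (s1 + s2) (Gdiff G) (vsub x y) <= sigma_sG s1 G x + sigma_sG s2 G y.
Proof.
set S := sigma_sG _ _ _.
have S_le u v : in_SH s1 G u -> in_SH s2 G v -> S <= norm1 (vsub x u) + norm1 (vsub y v).
  move=> Hu Hv; apply: Rle_trans (sigma_le_dist _ (in_SH_Gdiff_sub Hu Hv)) _.
  have -> : vsub (vsub x y) (vsub u v) = vsub (vsub x u) (vsub y v).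
    by apply: functional_extensionality => i; rewrite /vsub; ring.
  exact: norm1_sub_le.
suff : S - sigma_sG s1 G x <= sigma_sG s2 G y by lra.
apply: (sigma_ge z0) => v Hv.
suff : S - norm1 (vsub y v) <= sigma_sG s1 G x by lra.
by apply: (sigma_ge z0) => u Hu; have := S_le u v Hu Hv; lra.
Qed.

Lemma Gdiff_decompose s1 s2 eta w : in_SH (s1 + s2) (Gdiff G) w ->
  exists x1 x2, eta = vsub x1 x2 /\ in_SH s1 G (vsub x1 (vsub eta w)) /\ in_SH s2 G x2.
Proof.
move=> [[z1 z2] Hw]; have [nu1 [nu2 [nu_eq [Hnu1 Hnu2]]]] := norm0_split Hw.
exists (vadd (vadd (G z1) nu1) (vsub eta w)), (vsub (G z2) nu2); split; [|split].
- apply: functional_extensionality => i; move: (congr1 (fun f => f i) nu_eq).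
  by rewrite /vadd /Gdiff /vsub /=; lra.
- exists z1; rewrite /in_S.
  suff -> : vsub (vsub (vadd (vadd (G z1) nu1) (vsub eta w)) (vsub eta w)) (G z1) = nu1 by [].
  by apply: functional_extensionality => i; rewrite /vadd /vsub; ring.
- exists z2; rewrite /in_S.
  suff -> : vsub (vsub (G z2) nu2) (G z2) = fun i => - nu2 i by rewrite norm0_opp.
  by apply: functional_extensionality => i; rewrite /vsub; ring.
Qed.

End DifferenceModel.

Section Decoders.

Variables (m n : nat) (A : mat m n).

Lemma mulv_sub (x y : vec n) : mulv A (vsub x y) = vsub (mulv A x) (mulv A y).
Proof.
apply: functional_extensionality => i; rewrite /mulv /vsub.
rewrite (eq_bigr (fun j => A i j * x j + - (A i j * y j))); last by move=> j _; ring.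
by rewrite big_split sumR_opp.
Qed.

Lemma decoder_error_sub_le (Delta : vec m -> vec n) (err : vec n -> R) (emax : R) :
  0 <= emax ->
  (forall x e, norm2 e <= emax -> norm2 (vsub x (Delta (vadd (mulv A x) e))) <= err x) ->
  forall x1 x2, in_tube A emax (vsub x1 x2) -> norm2 (vsub x1 x2) <= err x1 + err x2.
Proof.
move=> emax_ge0 Delta_err x1 x2 tube.
have same_y : vadd (mulv A x2) (mulv A (vsub x1 x2)) = vadd (mulv A x1) (fun _ => 0).
  by apply: functional_extensionality => i; rewrite mulv_sub /vadd /vsub; ring.
have err1 := Delta_err x1 (fun _ => 0) ltac:(rewrite norm2_0; lra).
have := Delta_err x2 _ tube; rewrite same_y norm2_subC => err2.
have := norm2_sub_le x1 (Delta (vadd (mulv A x1) (fun _ => 0))) x2; lra.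
Qed.

Variables (k : nat) (G : vec k -> vec n) (emax : R) (l : nat).

Lemma minimiser_error_le (K B : R) (x : vec n) (e : vec m) (xhat : vec n) : 0 <= K ->
  (forall eta, in_tube A (2 * emax) eta ->
     norm2 eta <= K / 2 * sigma_sG (2 * l) (Gdiff G) eta + B) ->
  norm2 e <= emax ->
  norm2 (vsub (mulv A xhat) (vadd (mulv A x) e)) <= emax ->
  (forall x', norm2 (vsub (mulv A x') (vadd (mulv A x) e)) <= emax ->
     sigma_sG l G xhat <= sigma_sG l G x') ->
  norm2 (vsub x xhat) <= K * sigma_sG l G x + B.
Proof.
move=> K_ge0 tube_bound e_le; set y := vadd (mulv A x) e => xhat_feasible xhat_min.
have x_feasible : norm2 (vsub (mulv A x) y) <= emax.
  rewrite norm2_subC (_ : vsub y (mulv A x) = e) //.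
  by apply: functional_extensionality => i; rewrite /y /vadd /vsub; ring.
have tube : in_tube A (2 * emax) (vsub x xhat).
  rewrite /in_tube mulv_sub; apply: Rle_trans (norm2_sub_le _ y _) _.
  by rewrite (norm2_subC y); lra.
have sigma_le : sigma_sG (2 * l) (Gdiff G) (vsub x xhat) <= 2 * sigma_sG l G x.
  rewrite mul2n -addnn; apply: Rle_trans (sigma_Gdiff_sub_le G l l x xhat) _.
  by have := xhat_min x x_feasible; lra.
have := tube_bound _ tube.
have : K / 2 * sigma_sG (2 * l) (Gdiff G) (vsub x xhat) <= K / 2 * (2 * sigma_sG l G x).
  by apply: Rmult_le_compat_l; lra.
lra.
Qed.

Lemma tube_bound_of_decoder (Delta : vec m -> vec n) (K B : R) : 0 <= emax -> 0 <= K ->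
  (forall x e, norm2 e <= emax ->
     norm2 (vsub x (Delta (vadd (mulv A x) e))) <= K * sigma_sG l G x + B) ->
  forall eta, in_tube A emax eta ->
    norm2 eta <= K * sigma_sG (2 * l) (Gdiff G) eta + 2 * B.
Proof.
move=> emax_ge0 K_ge0 Delta_err eta tube.
apply: (sigma_ge_affine (fun _ => 0, fun _ => 0)) => // w.
rewrite mul2n -addnn => /(Gdiff_decompose eta) [x1 [x2 [eta_eq [Hx1 Hx2]]]].
have sigma_x1 : sigma_sG l G x1 <= norm1 (vsub eta w).
  rewrite -[in X in _ <= X](_ : vsub x1 (vsub x1 (vsub eta w)) = vsub eta w).
    exact: sigma_le_dist.
  by apply: functional_extensionality => i; rewrite /vsub; ring.
have sigma_x2 := sigma_le0 Hx2.
have err_sum : norm2 eta <= K * sigma_sG l G x1 + B + (K * sigma_sG l G x2 + B).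
  by rewrite eta_eq in tube *; apply: decoder_error_sub_le emax_ge0 Delta_err _ _ tube.
have := Rmult_le_compat_l K _ _ K_ge0 sigma_x1.
have := Rmult_le_compat_l K _ _ K_ge0 sigma_x2.
lra.
Qed.

End Decoders.

Theorem lemma3 (m n k : nat) (A : mat m n) (G : vec k -> vec n)
  (emax : R) (l : nat) (C0 C1 delta t : R)
  (Hemax : 0 <= emax) (Hl : (0 < l)%nat)
  (HC0 : 0 <= C0) (HC1 : 0 <= C1) (Hdelta : 0 <= delta) (Ht : 0 <= t) :
  ((forall eta : vec n, in_tube A (2 * emax) eta ->
      norm2 eta <= C0 / 2 * Rpower (INR l) (- t) * sigma_sG (2 * l)%nat (Gdiff G) eta
                   + C1 * emax + delta) ->
   forall (x : vec n) (e : vec m), norm2 e <= emax ->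
   forall xhat : vec n,
     norm2 (vsub (mulv A xhat) (vadd (mulv A x) e)) <= emax ->
     (forall x' : vec n, norm2 (vsub (mulv A x') (vadd (mulv A x) e)) <= emax ->
        sigma_sG l G xhat <= sigma_sG l G x') ->
     norm2 (vsub x xhat) <= C0 * Rpower (INR l) (- t) * sigma_sG l G x + C1 * emax + delta)
  /\
  (forall Delta : vec m -> vec n,
     (forall (x : vec n) (e : vec m), norm2 e <= emax ->
        norm2 (vsub x (Delta (vadd (mulv A x) e)))
          <= C0 * Rpower (INR l) (- t) * sigma_sG l G x + C1 * emax + delta) ->
     forall eta : vec n, in_tube A emax eta ->
       norm2 eta <= C0 * Rpower (INR l) (- t) * sigma_sG (2 * l)%nat (Gdiff G) eta
                    + 2 * C1 * emax + 2 * delta).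
Proof.
set K := C0 * Rpower (INR l) (- t).
have K_ge0 : 0 <= K by apply: Rmult_le_pos => //; apply: Rlt_le; apply: exp_pos.
split.
- move=> tube_bound x e e_le xhat; rewrite Rplus_assoc.
  apply: minimiser_error_le K_ge0 _ e_le => eta /tube_bound.
  by rewrite (_ : C0 / 2 * Rpower (INR l) (- t) = K / 2) /K; [lra | field].
- move=> Delta Delta_err eta tube.
  have Delta_err' x e : norm2 e <= emax ->
      norm2 (vsub x (Delta (vadd (mulv A x) e))) <= K * sigma_sG l G x + (C1 * emax + delta).
    by move=> e_le; have := Delta_err x e e_le; lra.
  by have := tube_bound_of_decoder Hemax K_ge0 Delta_err' tube; lra.
Qed.
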